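(* Let $X$ be a finite $T_0$ topological space, let $\mathcal V$ be a multivector field on $X$ such that $X$ is invariant, and let $\mathcal M=\{M_p\mid p\in\mathbb P\}$ be a Morse predecomposition of $X$. If among the admissible preorders on $\mathbb P$ there is a partial order, then the indexed family $\mathcal M':=\{M_{\{p\}}\mid p\in\mathbb P\}$ is a Morse decomposition of $X$.
   Context: Notation: $\operatorname{cl}$ is closure; $A\subset X$ is locally closed if $\operatorname{cl}A\setminus A$ is closed. A multivector field $\mathcal V$ on $X$ is a partition of $X$ into locally closed sets (multivectors); $[x]_{\mathcal V}$ is the multivector containing $x$. A multivector $V$ is critical if the relative singular homology $H(\operatorname{cl}V,\operatorname{cl}V\setminus V)$ is nontrivial, regular otherwise. $A$ is $\mathcal V$-compatible if it is a union of multivectors; the $\mathcal V$-hull $\langle A\rangle_{\mathcal V}$ is the smallest locally closed $\mathcal V$-compatible set containing $A$. Put $\Pi_{\mathcal V}(x)=\operatorname{cl}\{x\}\cup[x]_{\mathcal V}$. A solution is a partial map $\gamma:\mathbb Z\nrightarrow X$ whose domain is an interval of integers and $\gamma(t+1)\in\Pi_{\mathcal V}(\gamma(t))$ whenever $t,t+1\in\operatorname{dom}\gamma$; a path is a solution with finite domain; a full solution has domain $\mathbb Z$. For a full solution, $\alpha(\gamma)=\langle\bigcap_{t\in\mathbb Z,t\le0}\gamma((-\infty,t])\rangle_{\mathcal V}$ and $\omega(\gamma)=\langle\bigcap_{t\in\mathbb Z,t\ge0}\gamma([t,\infty))\rangle_{\mathcal V}$. A full solution is essential unless $\alpha(\gamma)$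 or $\omega(\gamma)$ is contained in a single regular multivector. An essential solution in $A$ is an essential full solution with image in $A$. For $S\subset X$, $\operatorname{Inv}S$ is the set of $x\in S$ such that some essential solution $\gamma$ in $S$ has $\gamma(0)=x$; $S$ is invariant if $\operatorname{Inv}S=S$. An invariant set $S$ is an isolated invariant set if there is a closed $N\supset\Pi_{\mathcal V}(S)$ such that every path in $N$ with both endpoints in $S$ has image in $S$. Links: for invariant $S_1,S_2$, a full solution $\gamma$ is a link from $S_1$ to $S_2$ if $\alpha(\gamma)\cap S_1\ne\emptyset\ne\omega(\gamma)\cap S_2$. Morse predecomposition of $X$: an indexed family $\mathcal M=\{M_p\mid p\in\mathbb P\}$ of mutually disjoint isolated invariant subsets of $X$ such that every essential solution in $X$ is a link from $M_p$ to $M_q$ for some $p,q\in\mathbb P$. A preorder $\le$ on $\mathbb P$ is admissible if the existence of a link from $M_p$ to $M_q$ implies $q\le p$. An invariant $T\subset X$ is saturated (in $X$) if every essential solution $\gamma$ in $X$ with $\alpha(\gamma)\subset T$ and $\omega(\gamma)\subset T$ has $\operatorname{im}\gamma\subset T$. A Morse decomposition of $X$ is a Morse predecomposition all of whose members are saturated and for which some admissible preorder is a partial order. For $C\subset X$ put $\mathbb P_C=\{p\in\mathbb P\mid M_p\cap C\neq\emptyset\}$. For $\mathbb Q\subset\mathbb P$, let $\operatorname{eSol}_{\mathbb Q}(X)$ be the set of essential solutions $\gamma$ in $X$ with $\mathbb P_{\alpha(\gamma)}\cap\mathbb Q\ne\emptyset\ne\mathbb P_{\omega(\gamma)}\cap\mathbb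 Q$, and $M_{\mathbb Q}:=\bigcup\{\operatorname{im}\gamma\mid\gamma\in\operatorname{eSol}_{\mathbb Q}(X)\}$. *)

From HB Require Import structures.
From mathcomp Require Import all_boot all_order all_algebra.
From mathcomp Require Import all_classical all_reals all_analysis.
From mathcomp Require Import Rstruct Rstruct_topology.
From Stdlib Require List.

Set Implicit Arguments.
Unset Strict Implicit.
Unset Printing Implicit Defensive.

Import Order.TTheory GRing.Theory Num.Theory.
Local Open Scope classical_set_scope.
Local Open Scope ring_scope.

Definition std_simplex (n : nat) : set 'rV[Rdefinitions.R]_(n.+1) :=
  [set t | (forall i, 0 <= t ord0 i) /\ \sum_i t ord0 i = 1].

(* The i-th coface map Delta^n -> Delta^(n+1): insert a 0 at coordinate i. *)
Arguments std_simplex : clear implicits.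
Definition coface (n : nat) (i : 'I_(n.+2)) (t : 'rV[Rdefinitions.R]_(n.+1)) : 'rV[Rdefinitions.R]_(n.+2) :=
  \row_j (match unlift i j with Some k => t ord0 k | None => 0 end).

Section Singular.
Variable T : topologicalType.

(* A (representative of a) singular n-simplex: a map R^(n+1) -> T that is
   continuous on the standard simplex; only its values on the simplex matter
   (see [sagree]). *)
Definition sing_simplex (n : nat) (s : 'rV[Rdefinitions.R]_(n.+1) -> T) : Prop :=
  {within std_simplex n, continuous s}.

Definition sagree (n : nat) (s u : 'rV[Rdefinitions.R]_(n.+1) -> T) : Prop :=
  forall t, std_simplex n t -> s t = u t.

Definition face (n : nat) (i : 'I_(n.+2)) (s : 'rV[Rdefinitions.R]_(n.+2) -> T) :
  'rV[Rdefinitions.R]_(n.+1) -> T := fun t => s (coface i t).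

(* Singular n-chains, as formal finite sums (lists of integer-weighted simplices). *)
Definition chain (n : nat) := seq (int * ('rV[Rdefinitions.R]_(n.+1) -> T))%type.

Definition coef (n : nat) (c : chain n) (u : 'rV[Rdefinitions.R]_(n.+1) -> T) : int :=
  \sum_(p <- c | `[< sagree p.2 u >]) p.1.

Definition chain_eq (n : nat) (c d : chain n) : Prop :=
  forall u, coef c u = coef d u.

Definition chain_in (A : set T) (n : nat) (c : chain n) : Prop :=
  List.Forall (fun p => sing_simplex p.2 /\ forall t, std_simplex n t -> A (p.2 t)) c.

Definition bdry (n : nat) (c : chain n.+1) : chain n :=
  flatten [seq [seq (((-1) ^+ (i : nat) * p.1)%R : int, face i p.2) | i : 'I_(n.+2) <- enum 'I_(n.+2)] | p <- c].

Definition rel_boundary (A B : set T) (n : nat) (c : chain n) : Prop :=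
  exists (d : chain n.+1) (e : chain n),
    chain_in A d /\ chain_in B e /\ chain_eq c (bdry d ++ e).

Definition rel_homology_nontrivial (A B : set T) : Prop :=
  (exists c : chain 0, chain_in A c /\ ~ rel_boundary A B c) \/
  (exists (n : nat) (c : chain n.+1), chain_in A c /\
     (exists e : chain n, chain_in B e /\ chain_eq (bdry c) e) /\
     ~ rel_boundary A B c).

Definition locally_closed (A : set T) : Prop := closed (closure A `\` A).

(* A multivector field: a partition of T into (nonempty) locally closed sets,
   given as the collection of its blocks. *)
Definition multivector_field (V : set (set T)) : Prop :=
  (forall A, V A -> A !=set0) /\
  (forall A B, V A -> V B -> A `&` B !=set0 -> A = B) /\
  (forall x, exists A, V A /\ A x) /\
  (forall A, V A -> locally_closed A).

Definition mv (V : set (set T)) (x : T) : set T :=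
  [set y | exists A, V A /\ A x /\ A y].

Definition critical (A : set T) : Prop :=
  rel_homology_nontrivial (closure A) (closure A `\` A).

Definition regular (A : set T) : Prop := ~ critical A.

Definition compatible (V : set (set T)) (A : set T) : Prop :=
  forall x, A x -> mv V x `<=` A.

Definition hull (V : set (set T)) (A : set T) : set T :=
  \bigcap_(B in [set B | locally_closed B /\ compatible V B /\ A `<=` B]) B.

Definition PiV (V : set (set T)) (x : T) : set T := closure [set x] `|` mv V x.

Definition PiV_set (V : set (set T)) (S : set T) : set T :=
  \bigcup_(x in S) PiV V x.

Definition full_solution (V : set (set T)) (g : int -> T) : Prop :=
  forall t : int, PiV V (g t) (g (t + 1)).

Definition alpha_lim (V : set (set T)) (g : int -> T) : set T :=
  hull V (\bigcap_(t in [set t : int | t <= 0]) (g @` [set s | s <= t])).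

Definition omega_lim (V : set (set T)) (g : int -> T) : set T :=
  hull V (\bigcap_(t in [set t : int | 0 <= t]) (g @` [set s | t <= s])).

Definition in_single_regular (V : set (set T)) (A : set T) : Prop :=
  exists B, V B /\ regular B /\ A `<=` B.

Definition essential (V : set (set T)) (g : int -> T) : Prop :=
  full_solution V g /\
  ~ in_single_regular V (alpha_lim V g) /\ ~ in_single_regular V (omega_lim V g).

Definition essential_in (V : set (set T)) (S : set T) (g : int -> T) : Prop :=
  essential V g /\ forall t, S (g t).

Definition Inv (V : set (set T)) (S : set T) : set T :=
  [set x | S x /\ exists g, essential_in V S g /\ g 0 = x].

Definition is_invariant (V : set (set T)) (S : set T) : Prop := Inv V S = S.

(* paths, indexed by {0,...,n} *)
Definition path_in (V : set (set T)) (N : set T) (n : nat) (g : nat -> T) : Prop :=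
  (forall i, (i < n)%N -> PiV V (g i) (g i.+1)) /\ (forall i, (i <= n)%N -> N (g i)).

Definition isolated_invariant (V : set (set T)) (S : set T) : Prop :=
  is_invariant V S /\
  exists N, closed N /\ PiV_set V S `<=` N /\
    forall n g, path_in V N n g -> S (g 0%N) -> S (g n) ->
      forall i, (i <= n)%N -> S (g i).

Definition link (V : set (set T)) (S1 S2 : set T) (g : int -> T) : Prop :=
  full_solution V g /\ alpha_lim V g `&` S1 !=set0 /\ omega_lim V g `&` S2 !=set0.

Definition morse_predecomposition (V : set (set T)) (P : Type) (M : P -> set T) : Prop :=
  (forall p q, p <> q -> M p `&` M q = set0) /\
  (forall p, isolated_invariant V (M p)) /\
  (forall g, essential_in V [set: T] g -> exists p q, link V (M p) (M q) g).

Definition preorder_rel (P : Type) (le : P -> P -> Prop) : Prop :=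
  (forall p, le p p) /\ (forall p q r, le p q -> le q r -> le p r).

Definition partial_order_rel (P : Type) (le : P -> P -> Prop) : Prop :=
  preorder_rel le /\ (forall p q, le p q -> le q p -> p = q).

Definition admissible (V : set (set T)) (P : Type) (M : P -> set T)
  (le : P -> P -> Prop) : Prop :=
  preorder_rel le /\ forall p q, (exists g, link V (M p) (M q) g) -> le q p.

Definition saturated (V : set (set T)) (S : set T) : Prop :=
  is_invariant V S /\
  forall g, essential_in V [set: T] g -> alpha_lim V g `<=` S -> omega_lim V g `<=` S ->
    forall t, S (g t).

Definition morse_decomposition (V : set (set T)) (P : Type) (M : P -> set T) : Prop :=
  morse_predecomposition V M /\ (forall p, saturated V (M p)) /\
  exists le, admissible V M le /\ partial_order_rel le.

Definition Pindex (P : Type) (M : P -> set T) (C : set T) : set P :=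
  [set p | M p `&` C !=set0].

Definition eSol (V : set (set T)) (P : Type) (M : P -> set T) (Q : set P) : set (int -> T) :=
  [set g | essential_in V [set: T] g /\
           Pindex M (alpha_lim V g) `&` Q !=set0 /\ Pindex M (omega_lim V g) `&` Q !=set0].

Definition MQ (V : set (set T)) (P : Type) (M : P -> set T) (Q : set P) : set T :=
  \bigcup_(g in eSol V M Q) range g.

End Singular.

From mathcomp Require Import all_boot all_order all_algebra.
From mathcomp Require Import all_classical all_reals all_analysis.
From mathcomp Require Import zify.
From Stdlib Require Import Relations.
Import Order.TTheory GRing.Theory Num.Theory.
Local Open Scope classical_set_scope.
Local Open Scope ring_scope.

(* Everything rests on gluing: if z lies on an essential solution whose
   alpha-limit meets M_p, w lies on one whose omega-limit meets M_q, and a path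
   leads from z to w, then the backward half of the first solution, the path
   and the forward half of the second form a link from M_p to M_q, so q <= p.
   Taking p = q shows that M_{p} contains every path between two of its points
   (so it is invariant, and isolated with N = X), and antisymmetry makes the
   sets M_{p} pairwise disjoint.  In a finite space every solution has
   nonempty alpha- and omega-limits, whence M_p is contained in M_{p}; and
   every point of alpha(g) reaches g while g reaches every point of omega(g),
   so a link from M_{p} to M_{q} yields a path and <= stays admissible. *)

Lemma finite_value_infinitely_often (T : choiceType) (u : nat -> T) :
  finite_set [set: T] -> exists x, forall N, exists2 n, (N <= n)%N & u n = x.
Proof.
move=> finT; apply: contrapT; rewrite -forallNE => never.
have avoid x : \forall n \near \oo, u n != x.
  have := never x; rewrite -existsNE => -[N Nx].
  by exists N => // n /= Nn; apply/eqP => unx; apply: Nx; exists n.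
have [n un] := filter_ex (filter_bigI (D := fset_set [set: T]) _ (fun x _ => avoid x)).
by have := un (u n); rewrite /= in_fset_set // inE eqxx => /(_ I).
Qed.

Lemma finite_specialization_closed (T : topologicalType) (C : set T) :
  finite_set [set: T] -> (forall x y, C x -> closure [set x] y -> C y) -> closed C.
Proof.
move=> finT stable.
have -> : C = \bigcup_(x in C) closure [set x].
  apply/seteqP; split=> [x Cx|y [x Cx]]; last exact: stable.
  by exists x => //; apply: subset_closure.
apply: closed_bigcup => [|x _]; last exact: closed_closure.
exact: sub_finite_set finT.
Qed.

Section Dynamics.
Variables (X : topologicalType) (V : set (set X)).
Implicit Types (A B : set X) (g d r : int -> X).

Lemma PiV_refl x : PiV V x x.
Proof. by left; apply: subset_closure. Qed.

Lemma mv_sym x y : mv V x y -> mv V y x.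
Proof. by move=> [B [VB [Bx By]]]; exists B. Qed.

Definition reach : X -> X -> Prop := clos_refl_trans X (PiV V).

Lemma full_solution_shift g k :
  full_solution V g -> full_solution V (fun u => g (u + k)).
Proof. by move=> fg t; have := fg (t + k); rewrite addrAC. Qed.

Lemma full_solution_reach {g s1 s2} :
  full_solution V g -> s1 <= s2 -> reach (g s1) (g s2).
Proof.
move=> fg le12; have -> : s2 = s1 + `|s2 - s1|%N%:Z by lia.
elim: `|s2 - s1|%N => [|n IH]; first by rewrite addr0; apply: rt_refl.
by apply: rt_trans IH (rt_step _ _ _ _ _); rewrite -addn1 PoszD addrA; apply: fg.
Qed.

Lemma path_in_reach {N n p j k} :
  path_in V N n p -> (j <= k <= n)%N -> reach (p j) (p k).
Proof.
move=> [step _] /andP[jk]; rewrite -(subnKC jk).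
elim: (k - j)%N => [|m IH] kn; first by rewrite addn0; apply: rt_refl.
rewrite addnS in kn *.
exact: rt_trans (IH (ltnW kn)) (rt_step _ _ _ _ (step _ kn)).
Qed.

Definition alpha_points (g : int -> X) : set X :=
  [set x | forall t, exists2 s, s <= t & g s = x].

Definition omega_points (g : int -> X) : set X :=
  [set x | forall t, exists2 s, t <= s & g s = x].

Lemma alpha_limE g : alpha_lim V g = hull V (alpha_points g).
Proof.
congr hull; apply/seteqP; split=> x /= gx t.
- have [t0|t0] := lerP t 0; first exact: gx.
  by have [s /= s0 <-] := gx 0 (lexx 0); exists s => //; lia.
- by move=> _; apply: gx.
Qed.

Lemma omega_limE g : omega_lim V g = hull V (omega_points g).
Proof.
congr hull; apply/seteqP; split=> x /= gx t.
- have [t0|t0] := lerP 0 t; first exact: gx.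
  by have [s /= s0 <-] := gx 0 (lexx 0); exists s => //; lia.
- by move=> _; apply: gx.
Qed.

Lemma alpha_lim_tail r g c k :
  (forall u, u <= c -> r u = g (u + k)) -> alpha_lim V r = alpha_lim V g.
Proof.
move=> rg; rewrite !alpha_limE; congr hull; apply/seteqP; split=> x gx t.
- have [s sm <-] := gx (Order.min (t - k) c).
  by exists (s + k); [lia | rewrite rg //; lia].
- have [s sm <-] := gx (Order.min t c + k).
  by exists (s - k); [lia | rewrite rg ?subrK //; lia].
Qed.

Lemma omega_lim_tail r g c k :
  (forall u, c <= u -> r u = g (u + k)) -> omega_lim V r = omega_lim V g.
Proof.
move=> rg; rewrite !omega_limE; congr hull; apply/seteqP; split=> x gx t.
- have [s sm <-] := gx (Order.max (t - k) c).
  by exists (s + k); [lia | rewrite rg //; lia].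
- have [s sm <-] := gx (Order.max t c + k).
  by exists (s - k); [lia | rewrite rg ?subrK //; lia].
Qed.

Lemma alpha_lim_shift g k : alpha_lim V (fun u => g (u + k)) = alpha_lim V g.
Proof. exact: (@alpha_lim_tail _ _ 0). Qed.

Lemma omega_lim_shift g k : omega_lim V (fun u => g (u + k)) = omega_lim V g.
Proof. exact: (@omega_lim_tail _ _ 0). Qed.

Lemma alpha_points_nonempty g : finite_set [set: X] -> alpha_points g !=set0.
Proof.
move=> finX.
have [x gx] := @finite_value_infinitely_often _ (fun n : nat => g (- n%:Z)) finX.
by exists x => t; have [n tn <-] := gx `|t|%N; exists (- n%:Z) => //; lia.
Qed.

Lemma omega_points_nonempty g : finite_set [set: X] -> omega_points g !=set0.
Proof.
move=> finX.
have [x gx] := @finite_value_infinitely_often _ (fun n : nat => g n%:Z) finX.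
by exists x => t; have [n tn <-] := gx `|t|%N; exists n%:Z => //; lia.
Qed.

Lemma sub_hull A : A `<=` hull V A.
Proof. by move=> x Ax B [_ [_ AB]]; apply: AB. Qed.

Lemma hull_min A B :
  locally_closed B -> compatible V B -> A `<=` B -> hull V A `<=` B.
Proof. by move=> lcB cB AB x; apply. Qed.

Lemma alpha_lim_meet A g :
  finite_set [set: X] -> (forall t, A (g t)) -> A `&` alpha_lim V g !=set0.
Proof.
move=> finX gA; have [x gx] := alpha_points_nonempty g finX.
exists x; split; last by rewrite alpha_limE; apply: sub_hull.
by have [s _ <-] := gx 0; apply: gA.
Qed.

Lemma omega_lim_meet A g :
  finite_set [set: X] -> (forall t, A (g t)) -> A `&` omega_lim V g !=set0.
Proof.
move=> finX gA; have [x gx] := omega_points_nonempty g finX.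
exists x; split; last by rewrite omega_limE; apply: sub_hull.
by have [s _ <-] := gx 0; apply: gA.
Qed.

Lemma closed_locally_closed A : closed A -> locally_closed A.
Proof.
move=> /closure_id cA; rewrite /locally_closed -cA setDv; exact: closed0.
Qed.

Lemma closedC_locally_closed A : closed (~` A) -> locally_closed A.
Proof.
by move=> cA; rewrite /locally_closed setDE; apply: closedI => //; apply: closed_closure.
Qed.

Lemma alpha_lim_reach {g z} :
  finite_set [set: X] -> alpha_lim V g z -> exists s, reach z (g s).
Proof.
move=> finX; rewrite alpha_limE.
apply: (@hull_min _ [set x | exists s, reach x (g s)]) => [|x [s xs] y xy|y gy].
- apply: closedC_locally_closed; apply: finite_specialization_closed => // x y nx xy [s ys].
  by apply: nx; exists s; apply: rt_trans (rt_step _ _ _ _ _) ys; left.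
- by exists s; apply: rt_trans (rt_step _ _ _ _ _) xs; right; apply: mv_sym.
- by have [s _ <-] := gy 0; exists s; apply: rt_refl.
Qed.

Lemma omega_lim_reach {g w} : finite_set [set: X] -> omega_lim V g w ->
  forall t, exists2 s, t <= s & reach (g s) w.
Proof.
move=> finX; rewrite omega_limE.
apply: (@hull_min _ [set x | forall t, exists2 s, t <= s & reach (g s) x])
  => [|x xB y xy t|y gy t].
- apply: closed_locally_closed; apply: finite_specialization_closed => // x y xB xy t.
  by have [s ts sx] := xB t; exists s => //; apply: rt_trans sx (rt_step _ _ _ _ _); left.
- by have [s ts sx] := xB t; exists s => //; apply: rt_trans sx (rt_step _ _ _ _ _); right.
- by have [s ts <-] := gy t; exists s => //; apply: rt_refl.
Qed.

Definition splice (g d : int -> X) (u : int) : X := if u <= 0 then g u else d u.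

Lemma splice_full g d : full_solution V g -> full_solution V d ->
  PiV V (g 0) (d 1) -> full_solution V (splice g d).
Proof.
move=> fg fd gd u; rewrite /splice.
have [u_neg|u_pos|->] := ltrgtP u 0.
- by rewrite ifT; [apply: fg | lia].
- by rewrite ifF; [apply: fd | lia].
- by rewrite add0r /=.
Qed.

Lemma alpha_lim_splice g d : alpha_lim V (splice g d) = alpha_lim V g.
Proof. by apply: (@alpha_lim_tail _ _ 0 0) => u u0; rewrite /splice u0 addr0. Qed.

Lemma omega_lim_splice g d : omega_lim V (splice g d) = omega_lim V d.
Proof.
by apply: (@omega_lim_tail _ _ 1 0) => u u1; rewrite /splice addr0 ifF //; lia.
Qed.

Lemma solution_reach_forward {g t y} : full_solution V g -> reach (g t) y ->
  exists r, [/\ full_solution V r, alpha_lim V r = alpha_lim V g & r 0 = y].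
Proof.
move=> fg /(clos_rt_rtn1 _ _ _ _) gy; elim: gy => [|y' z y'z _ [r [fr ar r0]]].
  exists (fun u => g (u + t)); split; [exact: full_solution_shift | | by rewrite add0r].
  exact: alpha_lim_shift.
exists (fun u => splice r (fun=> z) (u + 1)); split.
- by apply/full_solution_shift/splice_full => // [u|]; [apply: PiV_refl | rewrite r0].
- by rewrite alpha_lim_shift alpha_lim_splice.
- by rewrite /splice add0r.
Qed.

Lemma solution_reach_backward {d s y} : full_solution V d -> reach y (d s) ->
  exists r, [/\ full_solution V r, omega_lim V r = omega_lim V d & r 0 = y].
Proof.
move=> fd /(clos_rt_rt1n _ _ _ _); move Ez: (d s) => z yz.
elim: yz Ez => [x <-|x y' z' xy' _ IH /IH [r [fr or r0]]].
  exists (fun u => d (u + s)); split; [exact: full_solution_shift | | by rewrite add0r].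
  exact: omega_lim_shift.
exists (splice (fun=> x) (fun u => r (u - 1))); split.
- apply: splice_full => [u||]; first exact: PiV_refl.
    exact: full_solution_shift.
  by rewrite subrr r0.
- by rewrite omega_lim_splice omega_lim_shift.
- by rewrite /splice lexx.
Qed.

Lemma solution_glue {g d t s y} : full_solution V g -> full_solution V d ->
  reach (g t) y -> reach y (d s) ->
  exists r, [/\ full_solution V r, alpha_lim V r = alpha_lim V g,
               omega_lim V r = omega_lim V d & r 0 = y].
Proof.
move=> fg fd gy yd.
have [r1 [fr1 ar1 r10]] := solution_reach_forward fg gy.
have [r2 [fr2 or2 r20]] := solution_reach_backward fd yd.
exists (splice r1 (fun u => r2 (u - 1))); split.
- apply: splice_full => //; first exact: full_solution_shift.
  by rewrite subrr r10 r20; apply: PiV_refl.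
- by rewrite alpha_lim_splice.
- by rewrite omega_lim_splice omega_lim_shift.
- by rewrite /splice lexx.
Qed.

Section MorseSets.
Variables (P : Type) (M : P -> set X).
Local Notation M1 p := (MQ V M [set p]).

Lemma eSol1P p g : eSol V M [set p] g <->
  [/\ essential V g, M p `&` alpha_lim V g !=set0 & M p `&` omega_lim V g !=set0].
Proof.
split=> [[[eg _] [[q [ap /= <-]] [q' [op /= q'q]]]]|[eg ap op]].
  by split=> //; rewrite -q'q.
by split; [|split; exists p].
Qed.

Lemma MQ_range Q g : eSol V M Q g -> forall t, MQ V M Q (g t).
Proof. by move=> eg t; exists g => //; exists t. Qed.

Lemma eSol1_glue {p g d t s y} : eSol V M [set p] g -> eSol V M [set p] d ->
  reach (g t) y -> reach y (d s) -> exists2 r, eSol V M [set p] r & r 0 = y.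
Proof.
move=> /eSol1P[[fg [ag _]] ga _] /eSol1P[[fd [_ od]] _ dw] gy yd.
have [r [fr ar or r0]] := solution_glue fg fd gy yd.
by exists r => //; apply/eSol1P; rewrite /essential ar or.
Qed.

Lemma reach_MQ1_le le p q z w : admissible V M le ->
  M1 p z -> M1 q w -> reach z w -> le q p.
Proof.
move=> [_ adm] [g /eSol1P[[fg _] ga _] [t _ <-]] [d /eSol1P[[fd _] _ dw] [s _ <-]] gd.
have [r [fr ar or _]] := solution_glue fg fd (rt_refl _ _ _) gd.
by apply: adm; exists r; split=> //; rewrite ar or; split; rewrite setIC.
Qed.

Lemma MQ1_invariant p : is_invariant V (M1 p).
Proof.
apply/seteqP; split=> [x [] //|_ [g eg [t _ <-]]]; split; first exact: MQ_range.
have [r er r0] := eSol1_glue eg eg (rt_refl _ _ (g t)) (rt_refl _ _ (g t)).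
by exists r; split=> //; split; [case/eSol1P: er | exact: MQ_range er].
Qed.

Lemma MQ1_isolated p : isolated_invariant V (M1 p).
Proof.
split; first exact: MQ1_invariant.
exists setT; split; first exact: closedT.
split=> // n c cpath [g eg [t _ gt]] [d ed [s _ ds]] i ilen.
have gc : reach (g t) (c i) by rewrite gt; apply: (path_in_reach cpath); rewrite ilen.
have cd : reach (c i) (d s) by rewrite ds; apply: (path_in_reach cpath); rewrite ilen /=.
by have [r er <-] := eSol1_glue eg ed gc cd; apply: MQ_range.
Qed.

Variable le : P -> P -> Prop.
Hypothesis adm : admissible V M le.
Hypothesis le_anti : forall p q, le p q -> le q p -> p = q.

Lemma MQ1_disjoint {p q x} : M1 p x -> M1 q x -> p = q.
Proof.
move=> px qx; have xx : reach x x by apply: rt_refl.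
by apply: le_anti; [apply: reach_MQ1_le adm qx px xx | apply: reach_MQ1_le adm px qx xx].
Qed.

Hypothesis finX : finite_set [set: X].
Hypothesis pre : morse_predecomposition V M.

Lemma sub_MQ1 {p x} : M p x -> M1 p x.
Proof.
have [_ [/(_ p) [invM _] _]] := pre.
rewrite -{1}invM => -[_ [g [[eg gM] <-]]].
by apply: MQ_range; apply/eSol1P; split; [| apply: alpha_lim_meet | apply: omega_lim_meet].
Qed.

Lemma MQ1_predecomposition : morse_predecomposition V (fun p => M1 p).
Proof.
have [_ [_ links]] := pre.
split; [|split; first exact: MQ1_isolated].
  move=> p q pq; apply/seteqP; split=> x // [px qx].
  exact: pq (MQ1_disjoint px qx).
move=> g eg; have [a [b [fg [[z [az Maz]] [w [ow Mbw]]]]]] := links g eg.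
by exists a, b; split=> //; split; [exists z | exists w]; split=> //; apply: sub_MQ1.
Qed.

Lemma MQ1_saturated p : saturated V (M1 p).
Proof.
have [_ [_ links]] := pre.
split=> [|g eg ag og t]; first exact: MQ1_invariant.
have [a [b [_ [[z [az Maz]] [w [ow Mbw]]]]]] := links g eg.
have ap : a = p := MQ1_disjoint (sub_MQ1 Maz) (ag z az).
have bp : b = p := MQ1_disjoint (sub_MQ1 Mbw) (og w ow).
subst a b; apply: MQ_range; apply/eSol1P; split; first by case: eg.
  by exists z.
by exists w.
Qed.

Lemma MQ1_admissible : admissible V (fun p => M1 p) le.
Proof.
split=> [|p q [r [fr [[z [az pz]] [w [ow qw]]]]]]; first exact: adm.1.
have [s1 zr] := alpha_lim_reach finX az.
have [s2 s12 rw] := omega_lim_reach finX ow s1.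
apply: reach_MQ1_le adm pz qw _.
exact: rt_trans zr (rt_trans _ _ _ _ _ (full_solution_reach fr s12) rw).
Qed.

End MorseSets.

End Dynamics.

Theorem corollary4p15 (X : topologicalType) (V : set (set X)) (P : Type) (M : P -> set X) :
  finite_set [set: X] -> kolmogorov_space X ->
  multivector_field V ->
  is_invariant V [set: X] ->
  morse_predecomposition V M ->
  (exists le : P -> P -> Prop, admissible V M le /\ partial_order_rel le) ->
  morse_decomposition V (fun p : P => MQ V M [set p]).
Proof.
move=> finX _ _ _ pre [le [adm po]].
split; first exact: MQ1_predecomposition adm po.2 finX pre.
split; first exact: MQ1_saturated adm po.2 finX pre.
by exists le; split=> //; apply: MQ1_admissible adm finX.
Qed.
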